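(* Let $a_1,a_2,a_3,a_4,n,m$ be integers such that the eight numbers $a_1,a_2,a_3,a_4,n-a_1,n-a_2,n-a_3,n-a_4$ are pairwise distinct and no three distinct ones among them form a $3$-term arithmetic progression (i.e. there are no three distinct elements $u,v,w$ of this set with $u+v=2w$). Let $x_1,\dots,x_6$ be integers such that the multisets $$A=\{a_i+a_j+m,\ 2n-(a_i+a_j)+m\ :\ 1\le i\le j\le 4\}$$ and $$B=\{x_i+x_j+x_k\ :\ 1\le i<j<k\le 6\}$$ are equal (both have $20$ elements, counted with multiplicity). Then $x_1,\dots,x_6$ are pairwise distinct. *)

From mathcomp Require Import all_boot all_order all_algebra.
Set Implicit Arguments. Unset Strict Implicit. Unset Printing Implicit Defensive.
Import Order.TTheory GRing.Theory Num.Theory.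
Local Open Scope ring_scope.

Definition pairs4 : seq ('I_4 * 'I_4) :=
  [seq p <- enum {: 'I_4 * 'I_4} | (nat_of_ord p.1 <= nat_of_ord p.2)%N].

Definition triples6 : seq ('I_6 * 'I_6 * 'I_6) :=
  [seq t <- enum {: 'I_6 * 'I_6 * 'I_6}
     | (nat_of_ord t.1.1 < nat_of_ord t.1.2)%N && (nat_of_ord t.1.2 < nat_of_ord t.2)%N].

Definition eight (a : 'I_4 -> int) (n : int) : seq int :=
  [seq a i | i <- enum 'I_4] ++ [seq n - a i | i <- enum 'I_4].

Definition no3AP (s : seq int) : Prop :=
  forall u v w, u \in s -> v \in s -> w \in s ->
    u != v -> v != w -> u != w -> u + v != 2 * w.

Definition multA (a : 'I_4 -> int) (n m : int) : seq int :=
  [seq a p.1 + a p.2 + m | p <- pairs4]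
  ++ [seq 2 * n - (a p.1 + a p.2) + m | p <- pairs4].

Definition multB (x : 'I_6 -> int) : seq int :=
  [seq x t.1.1 + x t.1.2 + x t.2 | t <- triples6].

From mathcomp Require Import all_boot all_order all_algebra.
From mathcomp Require Import zify ring.
Import Order.TTheory GRing.Theory Num.Theory.
Local Open Scope ring_scope.

(* Suppose x_i = x_j =: y and let z_1, ..., z_4 be the other four values.  Then B
   consists of the eight sums 2y + z_k and z_k + z_l + z_r, plus each y + z_k + z_l
   twice, while A consists of the eight "diagonal" values 2v + m (v among the eight
   numbers, each value once) and twelve off-diagonal pair sums E.  The no-3AP condition
   keeps E off the diagonal, so the diagonal is exactly the first eight sums of B and E
   has only even multiplicities; a look at the few possible coincidences in E shows
   a_1 + a_2 + a_3 + a_4 = 2n.  Writing 2y + z_k = 2t_k + m, the t_k pick one element of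
   each pair {a_i, n - a_i}.  Depending on how many of them are a's, either some
   y + z_k + z_l is a diagonal value or the centre n + m of A, which E avoids, or
   t_1 + ... + t_4 = 2n, which is ruled out by comparing second moments about n + m. *)

Fixpoint pairs_of {T : Type} (s : seq T) : seq (T * T) :=
  if s is x :: s' then [seq (x, y) | y <- s'] ++ pairs_of s' else [::].

Fixpoint triples_of {T : Type} (s : seq T) : seq (T * T * T) :=
  if s is x :: s' then [seq (x, p.1, p.2) | p <- pairs_of s'] ++ triples_of s'
  else [::].

Lemma pairs_of_map (T U : Type) (f : T -> U) (s : seq T) :
  pairs_of (map f s) = [seq (f p.1, f p.2) | p <- pairs_of s].
Proof. by elim: s => //= x s ->; rewrite map_cat -!map_comp. Qed.

Lemma mem_pairs_of {T : eqType} {s : seq T} {p : T * T} :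
  uniq s -> p \in pairs_of s -> [/\ p.1 \in s, p.2 \in s & p.1 != p.2].
Proof.
elim: s => //= x s IH /andP[xs us]; rewrite mem_cat => /orP[/mapP[y ys ->]|/(IH us)[]] /=.
  by rewrite mem_head inE ys orbT; split=> //; apply: contraNneq xs => ->.
by move=> ps1 ps2 ne12; rewrite !inE ps1 ps2 !orbT.
Qed.

Lemma perm_cat_double_split (X : eqType) (T E L U : seq X) :
  uniq T -> {in E, forall e, e \notin T} -> size L = size T ->
  perm_eq (T ++ E) (L ++ U ++ U) -> perm_eq T L /\ perm_eq E (U ++ U).
Proof.
move=> uT ET sLT TE_LUU.
have UT : {in U, forall u, u \notin T}.
  move=> u uU; apply/negP => uT'; have := permP TE_LUU (pred1 u).
  rewrite !count_cat (count_uniq_mem _ uT) uT' (count_memPn (contraL (ET u) uT')).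
  by rewrite -has_pred1 has_count in uU; lia.
have TL : perm_eq T (filter (mem T) L).
  have := perm_filter (mem T) TE_LUU; rewrite !filter_cat.
  have /eqP -> : filter (mem T) E == [::].
    by rewrite -[_ == _]negbK -has_filter; apply/hasPn.
  have /eqP -> : filter (mem T) U == [::].
    by rewrite -[_ == _]negbK -has_filter; apply/hasPn.
  by rewrite !cats0 (all_filterP (allss T)).
have LT : all (mem T) L by rewrite all_count -size_filter -(perm_size TL) sLT.
rewrite (all_filterP LT) in TL; split=> //.
by rewrite -(perm_cat2l T); apply: perm_trans TE_LUU _; rewrite perm_cat2r perm_sym.
Qed.

Lemma mem_of_even_count (X : eqType) (x : X) (r1 r2 : seq X) :
  ~~ odd (count (pred1 x) (r1 ++ x :: r2)) -> x \in r1 ++ r2.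
Proof.
rewrite !count_cat /= eqxx mem_cat -!has_pred1 !has_count.
by case: (count _ r1) => [|c1] //; case: (count _ r2).
Qed.

Lemma sum_reflection_representatives {A ts : seq int} {n : int} :
  ~~ has (mem A) [seq n - a | a <- A] ->
  perm_eq (A ++ [seq n - a | a <- A]) (ts ++ [seq n - t | t <- ts]) ->
  \sum_(t <- ts) (if t \in A then t else n - t) = \sum_(a <- A) a.
Proof.
move=> dA pA; pose g v := if v \in A then v else 0.
have gA a : a \in A -> g a = a by rewrite /g => ->.
have gA' a : a \in A -> g (n - a) = 0.
  by move=> aA; rewrite /g ifF //; apply/negbTE/(hasPn dA)/map_f.
have g_ts : {in ts, forall t, g t + g (n - t) = if t \in A then t else n - t}.
  move=> t tts; have : t \in A ++ [seq n - a | a <- A] by rewrite (perm_mem pA) mem_cat tts.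
  rewrite mem_cat; case: ifP => [tA _ | _ /= /mapP[a aA ->]].
    by rewrite gA // gA' // addr0.
  by rewrite subKr gA' // gA // add0r.
have g_sum : \sum_(v <- A ++ [seq n - a | a <- A]) g v
           = \sum_(v <- ts ++ [seq n - t | t <- ts]) g v by apply: perm_big.
rewrite !big_cat !big_map /= in g_sum.
rewrite -(eq_big_seq _ g_ts) big_split /= -g_sum (eq_big_seq _ gA).
by rewrite [X in _ + X]big1_seq ?addr0 // => a /= /gA'.
Qed.

Lemma no3AP_sum_neq {S : seq int} : no3AP S ->
  {in S &, forall u v, u != v -> forall w, w \in S -> u + v != 2 * w}.
Proof.
move=> noAP u v uS vS uv w wS.
have [<-|vw] := eqVneq v w; first by apply: contra uv => /eqP; lia.
have [<-|uw] := eqVneq u w; first by apply: contra uv => /eqP; lia.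
exact: noAP.
Qed.

(* [lia] chokes on the expanded squares; treated as atoms they leave a linear problem. *)
Ltac lia_sqr_atoms :=
  repeat match goal with |- context [?x ^+ 2] => move: (x ^+ 2) => ? end; lia.

Lemma pair_sqr_sums_eq0 {d0 d1 d2 d3 p0 p1 p2 p3 : int} :
  d0 + d1 + d2 + d3 = 0 -> p0 + p1 + p2 + p3 = 0 ->
  d0 ^+ 2 + d1 ^+ 2 + d2 ^+ 2 + d3 ^+ 2 = p0 ^+ 2 + p1 ^+ 2 + p2 ^+ 2 + p3 ^+ 2 ->
  (d0 + d1) ^+ 2 + (d0 + d2) ^+ 2 + (d0 + d3) ^+ 2 + (d1 + d2) ^+ 2 + (d1 + d3) ^+ 2
    + (d2 + d3) ^+ 2 = 4 * ((p0 + p1) ^+ 2 + (p0 + p2) ^+ 2 + (p0 + p3) ^+ 2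
    + (p1 + p2) ^+ 2 + (p1 + p3) ^+ 2 + (p2 + p3) ^+ 2) ->
  d0 = 0.
Proof.
move=> sum_d sum_p squares pairs.
have pair_identity (x0 x1 x2 x3 : int) :
    (x0 + x1) ^+ 2 + (x0 + x2) ^+ 2 + (x0 + x3) ^+ 2 + (x1 + x2) ^+ 2 + (x1 + x3) ^+ 2
      + (x2 + x3) ^+ 2
    = 2 * (x0 ^+ 2 + x1 ^+ 2 + x2 ^+ 2 + x3 ^+ 2) + (x0 + x1 + x2 + x3) ^+ 2 by ring.
rewrite !pair_identity sum_d sum_p -squares expr0n /= !addr0 in pairs.
have : d0 ^+ 2 + d1 ^+ 2 + d2 ^+ 2 + d3 ^+ 2 == 0 by move: pairs; clear; lia_sqr_atoms.
rewrite -!addrA paddr_eq0 ?sqr_ge0 ?addr_ge0 ?sqr_ge0 // sqrf_eq0.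
by case/andP=> /eqP.
Qed.

Lemma reflection_sign_pattern {n t1 t2 t3 t4 : int} {b1 b2 b3 b4 : bool} :
  (if b1 then t1 else n - t1) + (if b2 then t2 else n - t2)
    + (if b3 then t3 else n - t3) + (if b4 then t4 else n - t4) = 2 * n ->
  t1 + t2 + t3 + t4 != 2 * n ->
  exists2 p, p \in pairs_of [:: t1; t2; t3; t4] &
    let u := 2 * (p.1 + p.2) + n - (t1 + t2 + t3 + t4) in
    u = n \/ exists2 t, t \in [:: t1; t2; t3; t4] & u = t + t.
Proof.
(* If the signs split 2-2, the pair with equal signs gives [u = n]; if they split 3-1,
   the odd one out paired with any other [t] gives [u = t + t]. *)
case: b1; case: b2; case: b3; case: b4 => /= sum_f S_neq;
  first [ by move: S_neq; lia
        | let hit := (rewrite /=; first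
            [ left; lia
            | right; first [ by exists t1; rewrite ?inE ?eqxx; lia
                           | by exists t2; rewrite ?inE ?eqxx ?orbT; lia
                           | by exists t3; rewrite ?inE ?eqxx ?orbT; lia
                           | by exists t4; rewrite ?inE ?eqxx ?orbT; lia ] ]) in
          first [ by exists (t1, t2); [rewrite !inE eqxx | hit]
                | by exists (t1, t3); [rewrite !inE eqxx ?orbT | hit]
                | by exists (t1, t4); [rewrite !inE eqxx ?orbT | hit]
                | by exists (t2, t3); [rewrite !inE eqxx ?orbT | hit]
                | by exists (t2, t4); [rewrite !inE eqxx ?orbT | hit]
                | by exists (t3, t4); [rewrite !inE eqxx ?orbT | hit] ] ].
Qed.

Section RepeatedTripleSum.

Variables (a0 a1 a2 a3 n m y z1 z2 z3 z4 : int).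

(* [T ++ E] is the multiset A of the statement, [v + v + m] giving its terms with i = j;
   [L ++ U ++ U] is B when two of the x's equal [y] and [zs] are the other four. *)
Let A := [:: a0; a1; a2; a3].
Let A' := [seq n - a | a : int <- A].
Let s := A ++ A'.
Let zs := [:: z1; z2; z3; z4].
Let T := [seq v + v + m | v <- s].
Let E := [seq p.1 + p.2 + m | p <- pairs_of A ++ pairs_of A'].
Let L := [seq y + y + z | z <- zs] ++ [seq t.1.1 + t.1.2 + t.2 | t <- triples_of zs].
Let U := [seq y + p.1 + p.2 | p <- pairs_of zs].

Hypothesis s_uniq : uniq s.
Hypothesis s_no3AP : no3AP s.
Hypothesis TE_LUU : perm_eq (T ++ E) (L ++ U ++ U).

Lemma halves_disjoint : ~~ has (mem A) A'.
Proof. by move: s_uniq; rewrite cat_uniq => /and3P[]. Qed.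

Lemma s_neq (i j : nat) : (i < j < 8)%N -> s`_i != s`_j.
Proof. by case/andP=> ij j8; rewrite nth_uniq // ?neq_ltn ?ij // (ltn_trans ij). Qed.

Lemma s_mid (i j k : nat) : (i < j < 8)%N -> (k < 8)%N -> s`_i + s`_j != 2 * s`_k.
Proof.
move=> ij k8; have /andP[lt_ij j8] := ij.
have s_mem l : (l < 8)%N -> s`_l \in s by move=> l8; apply: mem_nth.
exact: no3AP_sum_neq s_no3AP _ _ (s_mem _ (ltn_trans lt_ij j8)) (s_mem _ j8)
                     (s_neq _ _ ij) _ (s_mem _ k8).
Qed.

Lemma A_uniq : uniq A.
Proof. by move: s_uniq; rewrite cat_uniq => /and3P[]. Qed.

Lemma A_pair_sum_neq {q : int * int} : q \in pairs_of A -> q.1 + q.2 != n.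
Proof.
case/(mem_pairs_of A_uniq)=> q1 q2 _; apply: contraTneq q2 => sum_q.
rewrite (_ : q.2 = n - q.1); last by lia.
by apply/(hasPn halves_disjoint)/mapP; exists q.1.
Qed.

Lemma E_pair_spec (p : int * int) : p \in pairs_of A ++ pairs_of A' ->
  [/\ p.1 \in s, p.2 \in s, p.1 != p.2 & p.1 + p.2 != n].
Proof.
rewrite mem_cat => /orP[pA | ].
  have [p1 p2 p12] := mem_pairs_of A_uniq pA.
  by rewrite !mem_cat p1 p2 A_pair_sum_neq.
rewrite /A' pairs_of_map => /mapP[[u v] uvA ->] /=.
have [uA vA uv] := mem_pairs_of A_uniq uvA; have := A_pair_sum_neq uvA.
rewrite /= in uv; rewrite !mem_cat !(map_f (fun a : int => n - a)) ?orbT //=.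
by split=> //; lia.
Qed.

Lemma E_notin_T : {in E, forall e, e \notin T}.
Proof.
move=> _ /mapP[[u v] /E_pair_spec[/= uS vS uv _] ->]; apply/mapP => -[w wS].
by apply/eqP; move: (no3AP_sum_neq s_no3AP _ _ uS vS uv _ wS); lia.
Qed.

Lemma center_notin_E : n + m \notin E.
Proof. by apply/mapP => -[[u v] /E_pair_spec[_ _ _ /= uv]]; lia. Qed.

Lemma TE_split : perm_eq T L /\ perm_eq E (U ++ U).
Proof.
apply: perm_cat_double_split TE_LUU => //; last exact: E_notin_T.
by rewrite map_inj_uniq // => u v; lia.
Qed.

Lemma sum_A : a0 + a1 + a2 + a3 = 2 * n.
Proof.
have [_ E_UU] := TE_split.
have even e : ~~ odd (count (pred1 e) E).
  by rewrite (permP E_UU) count_cat addnn odd_double.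
(* Each value has even multiplicity in E, so a0 + a1 + m and a0 + a2 + m equal some other
   pair sum; distinctness and no-3AP rule out all but the complementary pair. *)
have pair01 : a0 + a1 = a2 + a3 \/ a0 + a1 + a2 + a3 = 2 * n.
  have := even (a0 + a1 + m); rewrite -[E]/([::] ++ a0 + a1 + m :: behead E).
  move/mem_of_even_count; rewrite !inE /= => coincide.
  repeat case/orP: coincide => [/eqP coincide | coincide].
  - by have : a1 != a2 := s_neq 1 2 isT; lia.
  - by have : a1 != a3 := s_neq 1 3 isT; lia.
  - by have : a0 != a2 := s_neq 0 2 isT; lia.
  - by have : a0 != a3 := s_neq 0 3 isT; lia.
  - by left; lia.
  - by have : a1 != n - a0 := s_neq 1 4 isT; lia.
  - by have : a1 + a2 != 2 * (n - a0) := s_mid 1 2 4 isT isT; lia.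
  - by have : a1 + a3 != 2 * (n - a0) := s_mid 1 3 4 isT isT; lia.
  - by have : a0 + a2 != 2 * (n - a1) := s_mid 0 2 5 isT isT; lia.
  - by have : a0 + a3 != 2 * (n - a1) := s_mid 0 3 5 isT isT; lia.
  - by right; lia.
have pair02 : a0 + a2 = a1 + a3 \/ a0 + a1 + a2 + a3 = 2 * n.
  have := even (a0 + a2 + m).
  rewrite -[E]/([:: a0 + a1 + m] ++ a0 + a2 + m :: drop 2 E).
  move/mem_of_even_count; rewrite !inE /= => coincide.
  repeat case/orP: coincide => [/eqP coincide | coincide].
  - by have : a1 != a2 := s_neq 1 2 isT; lia.
  - by have : a2 != a3 := s_neq 2 3 isT; lia.
  - by have : a0 != a1 := s_neq 0 1 isT; lia.
  - by left; lia.
  - by have : a0 != a3 := s_neq 0 3 isT; lia.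
  - by have : a1 + a2 != 2 * (n - a0) := s_mid 1 2 4 isT isT; lia.
  - by have : a2 != n - a0 := s_neq 2 4 isT; lia.
  - by have : a2 + a3 != 2 * (n - a0) := s_mid 2 3 4 isT isT; lia.
  - by have : a0 + a1 != 2 * (n - a2) := s_mid 0 1 6 isT isT; lia.
  - by right; lia.
  - by have : a0 + a3 != 2 * (n - a2) := s_mid 0 3 6 isT isT; lia.
case: pair01 => [p01|//]; case: pair02 => [p02|//].
by have : a1 != a2 := s_neq 1 2 isT; lia.
Qed.

Lemma exists_representatives : exists t1 t2 t3 t4 : int,
  perm_eq s ([:: t1; t2; t3; t4] ++ [seq n - t | t <- [:: t1; t2; t3; t4]]) /\
  U = [seq 2 * (p.1 + p.2) + (m + n - (t1 + t2 + t3 + t4)) | p <- pairs_of [:: t1; t2; t3; t4]].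
Proof.
have [T_L _] := TE_split.
have doubled z : z \in zs -> exists2 t, t \in s & y + y + z = t + t + m.
  move=> zz; have : y + y + z \in T.
    by rewrite (perm_mem T_L) mem_cat; apply/orP; left; apply/mapP; exists z.
  by case/mapP=> t ts ->; exists t.
have [t1 _ e1] : exists2 t, t \in s & y + y + z1 = t + t + m.
  by apply: doubled; rewrite !inE eqxx.
have [t2 _ e2] : exists2 t, t \in s & y + y + z2 = t + t + m.
  by apply: doubled; rewrite !inE eqxx ?orbT.
have [t3 _ e3] : exists2 t, t \in s & y + y + z3 = t + t + m.
  by apply: doubled; rewrite !inE eqxx ?orbT.
have [t4 _ e4] : exists2 t, t \in s & y + y + z4 = t + t + m.
  by apply: doubled; rewrite !inE eqxx ?orbT.
(* Comparing the totals of A and B makes the triple sum missing z_k equal 2 (n - t_k) + m. *)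
have sum_B : y + y + z1 + z2 + z3 + z4 = 2 * (n + m).
  have : \sum_(v <- T ++ E) v = \sum_(v <- L ++ U ++ U) v by apply: perm_big.
  rewrite /T /E /L /U /s /A' /A /zs /= !big_cons big_nil.
  by clear; lia.
exists t1, t2, t3, t4; split.
  have L_T : L = [seq v + v + m | v <- [:: t1; t2; t3; t4; n - t4; n - t3; n - t2; n - t1]].
    by rewrite /L /zs /=; repeat (apply: (congr2 cons); first lia).
  have double_inj : injective (fun v : int => v + v + m) by move=> u v /=; lia.
  rewrite L_T in T_L; apply: perm_trans (perm_map_inj double_inj T_L) _.
  rewrite -[[:: t1, t2, t3, t4 & _]]/
    ([:: t1; t2; t3; t4] ++ rev [:: n - t1; n - t2; n - t3; n - t4]).
  by rewrite perm_cat2l perm_rev.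
by rewrite /U /zs /=; repeat (apply: (congr2 cons); first lia).
Qed.

Lemma t_sum_neq {t1 t2 t3 t4 : int} :
  perm_eq s ([:: t1; t2; t3; t4] ++ [seq n - t | t <- [:: t1; t2; t3; t4]]) ->
  U = [seq 2 * (p.1 + p.2) + (m + n - (t1 + t2 + t3 + t4)) | p <- pairs_of [:: t1; t2; t3; t4]] ->
  t1 + t2 + t3 + t4 != 2 * n.
Proof.
move=> perm_s U_t; apply/eqP => sum_t; rewrite sum_t in U_t.
have d0_neq0 : 2 * a0 - n != 0 by have : a0 != n - a0 := s_neq 0 4 isT; lia.
have sum_d : 2 * a0 - n + (2 * a1 - n) + (2 * a2 - n) + (2 * a3 - n) = 0.
  by have := sum_A; lia.
have sum_p : 2 * t1 - n + (2 * t2 - n) + (2 * t3 - n) + (2 * t4 - n) = 0 by lia.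
have [_ E_UU] := TE_split.
have sq_E : \sum_(e <- E) (2 * e - 2 * (n + m)) ^+ 2
          = \sum_(u <- U ++ U) (2 * u - 2 * (n + m)) ^+ 2 by apply: perm_big.
have sq_s : \sum_(v <- s) (2 * v - n) ^+ 2
          = \sum_(v <- [:: t1; t2; t3; t4] ++ [seq n - t | t <- [:: t1; t2; t3; t4]])
              (2 * v - n) ^+ 2.
  exact: perm_big.
(* Centred at n + m and doubled, E consists of the +-(d_i + d_j) with d_i = 2 a_i - n,
   and U of the 2 (p_k + p_l) with p_k = 2 t_k - n. *)
have center_E (u v : int) :
  (2 * (u + v + m) - 2 * (n + m)) ^+ 2 = (2 * u - n + (2 * v - n)) ^+ 2 by ring.
have center_E' (u v : int) :
  (2 * (n - u + (n - v) + m) - 2 * (n + m)) ^+ 2 = (2 * u - n + (2 * v - n)) ^+ 2 by ring.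
have center_U (u v : int) :
  (2 * (2 * (u + v) + (m + n - 2 * n)) - 2 * (n + m)) ^+ 2
  = 4 * (2 * u - n + (2 * v - n)) ^+ 2 by ring.
have reflect_sq (v : int) : (2 * (n - v) - n) ^+ 2 = (2 * v - n) ^+ 2 by ring.
rewrite U_t /E /A' /A /= !big_cons !big_nil !center_E' !center_E !center_U in sq_E.
rewrite /s /A' /A /= !big_cons !big_nil !reflect_sq in sq_s.
move/eqP: d0_neq0; apply; apply: (pair_sqr_sums_eq0 sum_d sum_p).
  by move: sq_s; clear; lia_sqr_atoms.
by move: sq_E; clear; lia_sqr_atoms.
Qed.

Lemma repeated_triple_sum_absurd : False.
Proof.
have [t1 [t2 [t3 [t4 [perm_s U_t]]]]] := exists_representatives.
have signs : (if t1 \in A then t1 else n - t1) + (if t2 \in A then t2 else n - t2)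
    + (if t3 \in A then t3 else n - t3) + (if t4 \in A then t4 else n - t4) = 2 * n.
  have := sum_reflection_representatives halves_disjoint perm_s.
  by rewrite !big_cons !big_nil; have := sum_A; lia.
have [[u v] uv_ts hit] := reflection_sign_pattern signs (t_sum_neq perm_s U_t).
have [_ E_UU] := TE_split.
have uvE : 2 * (u + v) + (m + n - (t1 + t2 + t3 + t4)) \in E.
  by rewrite (perm_mem E_UU) mem_cat U_t; apply/orP; left; apply/mapP; exists (u, v).
case: hit => /= [center | [t tts double]].
  have {}center : n + m = 2 * (u + v) + (m + n - (t1 + t2 + t3 + t4)) by lia.
  by move: center_notin_E; rewrite center uvE.
have /negP := E_notin_T _ uvE; apply; apply/mapP; exists t; last by lia.
by rewrite (perm_mem perm_s) mem_cat tts.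
Qed.

End RepeatedTripleSum.

Lemma enum_prod (T1 T2 : finType) :
  enum {: T1 * T2} = [seq (x1, x2) | x1 <- enum T1, x2 <- enum T2].
Proof. by rewrite [in LHS]enumT unlock. Qed.

Lemma map_enum_ord (T : Type) (n : nat) (f : 'I_n.+1 -> T) :
  map f (enum 'I_n.+1) = [seq f (inord k) | k <- iota 0 n.+1].
Proof.
rewrite -val_enum_ord -map_comp; apply: eq_map => i /=.
by rewrite inord_val.
Qed.

Lemma val_enum_prod (n1 n2 : nat) (T : Type) (f : nat -> nat -> T) :
  [seq f (val p.1) (val p.2) | p <- enum {: 'I_n1 * 'I_n2}] =
  [seq f i j | i <- iota 0 n1, j <- iota 0 n2].
Proof.
by rewrite enum_prod map_allpairs -!val_enum_ord allpairs_mapl allpairs_mapr.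
Qed.

Lemma val_pairs4 :
  [seq (val p.1, val p.2) | p <- pairs4] =
  [seq p <- [seq (i, j) | i <- iota 0 4, j <- iota 0 4] | (p.1 <= p.2)%N].
Proof.
by rewrite -(val_enum_prod _ _ _ pair) filter_map.
Qed.

Lemma val_triples6 :
  [seq (val t.1.1, val t.1.2, val t.2) | t <- triples6] = triples_of (iota 0 6).
Proof.
pose lt3 (t : nat * nat * nat) := (t.1.1 < t.1.2 < t.2)%N.
have -> : triples_of (iota 0 6) =
  [seq t <- [seq (p.1, p.2, k) | p <- [seq (i, j) | i <- iota 0 6, j <- iota 0 6],
                                 k <- iota 0 6] | lt3 t] by vm_compute.
rewrite -(val_enum_prod 6 6 _ pair) -(val_enum_ord 6) allpairs_mapl allpairs_mapr.
rewrite /triples6 [in LHS]enum_prod.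
rewrite -(filter_map (fun t : 'I_6 * 'I_6 * 'I_6 => (val t.1.1, val t.1.2, val t.2)) lt3).
by rewrite map_allpairs.
Qed.

Lemma multA_perm (a : 'I_4 -> int) (n m : int) :
  perm_eq (multA a n m)
    ([seq v + v + m | v <- eight a n] ++
     [seq p.1 + p.2 + m | p <- pairs_of [seq a i | i <- enum 'I_4]
                               ++ pairs_of [seq n - a i | i <- enum 'I_4]]).
Proof.
have val_pairs (f : int -> int -> int) : [seq f (a p.1) (a p.2) | p <- pairs4] =
    [seq f (a (inord p.1)) (a (inord p.2)) | p <- [seq (val p.1, val p.2) | p <- pairs4]].
  by rewrite -map_comp; apply: eq_map => p /=; rewrite !inord_val.
have split4 : perm_eq [seq p <- [seq (i, j) | i <- iota 0 4, j <- iota 0 4] | (p.1 <= p.2)%N]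
                      ([seq (k, k) | k <- iota 0 4] ++ pairs_of (iota 0 4)) by vm_compute.
rewrite /multA /eight !map_enum_ord.
rewrite (val_pairs (fun u v => u + v + m)) (val_pairs (fun u v => 2 * n - (u + v) + m)) val_pairs4.
apply: perm_trans (perm_cat (perm_map _ split4) (perm_map _ split4)) _.
rewrite !map_cat perm_catACA; apply/permP => pr; congr count => /=.
by repeat (apply: (congr2 cons); first ring).
Qed.

Definition sum3 (f : nat -> int) (t : nat * nat * nat) : int := f t.1.1 + f t.1.2 + f t.2.

Definition sorted3 (t : nat * nat * nat) : seq nat := sort leq [:: t.1.1; t.1.2; t.2].

Lemma sum3_sorted (f : nat -> int) (t : nat * nat * nat) :
  sum3 f t = \sum_(k <- sorted3 t) f k.
Proof.
rewrite (@perm_big _ _ _ _ _ [:: t.1.1; t.1.2; t.2]) ?perm_sort //=.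
by rewrite !big_cons big_nil addr0 addrA.
Qed.

Definition others (i j : nat) : seq nat := [seq k <- iota 0 6 | (k != i) && (k != j)].

(* The index triples containing both [i] and [j], neither of them, [i] only and [j] only;
   when [x i = x j] the last two blocks give the same sums. *)
Definition regroup (i j : nat) (ks : seq nat) : seq (nat * nat * nat) :=
  [seq (i, j, k) | k <- ks] ++ triples_of ks
  ++ [seq (i, p.1, p.2) | p <- pairs_of ks] ++ [seq (j, p.1, p.2) | p <- pairs_of ks].

Lemma regroup_perm {i j : nat} : (i < 6)%N -> (j < 6)%N -> i != j ->
  size (others i j) = 4%N /\
  perm_eq (map sorted3 (triples_of (iota 0 6))) (map sorted3 (regroup i j (others i j))).
Proof.
move=> i6 j6 ij.
have : all (fun i => all (fun j => (i == j) || (size (others i j) == 4%N) &&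
  perm_eq (map sorted3 (triples_of (iota 0 6))) (map sorted3 (regroup i j (others i j))))
  (iota 0 6)) (iota 0 6) by vm_compute.
move/allP/(_ i); rewrite mem_iota => /(_ i6)/allP/(_ j); rewrite mem_iota (negbTE ij).
by move=> /(_ j6)/andP[/eqP].
Qed.

Lemma multB_of_repeat {x : 'I_6 -> int} {i j : 'I_6} : i != j -> x i = x j ->
  exists z1 z2 z3 z4 : int, let zs := [:: z1; z2; z3; z4] in
  perm_eq (multB x)
    (([seq x i + x i + z | z <- zs] ++ [seq t.1.1 + t.1.2 + t.2 | t <- triples_of zs])
     ++ [seq x i + p.1 + p.2 | p <- pairs_of zs] ++ [seq x i + p.1 + p.2 | p <- pairs_of zs]).
Proof.
move=> ij xij; pose X k := x (inord k).
have multBE : multB x = map (sum3 X) (triples_of (iota 0 6)).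
  by rewrite -val_triples6 -map_comp; apply: eq_map => t; rewrite /sum3 /X /= !inord_val.
have [size_ks perm_ks] := regroup_perm (ltn_ord i) (ltn_ord j) ij.
have perm_regroup : perm_eq (multB x) (map (sum3 X) (regroup i j (others i j))).
  rewrite multBE !(eq_map (sum3_sorted X)).
  by have := perm_map (fun ks => \sum_(k <- ks) X k) perm_ks; rewrite -!map_comp.
case: (others i j) size_ks perm_regroup => [|k1 [|k2 [|k3 [|k4 []]]]] // _.
exists (X k1), (X k2), (X k3), (X k4).
by rewrite /= /sum3 /X !inord_val -xij in perm_regroup.
Qed.

Theorem mainTheorem9 (a : 'I_4 -> int) (n m : int) (x : 'I_6 -> int) :
  uniq (eight a n) -> no3AP (eight a n) ->
  perm_eq (multA a n m) (multB x) ->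
  injective x.
Proof.
move=> uniq8 no3AP8 AB i j xij; apply/eqP; apply: contraT => ij.
have [z1 [z2 [z3 [z4 B_perm]]]] := multB_of_repeat ij xij.
have A_perm := multA_perm a n m; rewrite perm_sym in A_perm.
rewrite /eight !map_enum_ord in uniq8 no3AP8 A_perm.
case: (repeated_triple_sum_absurd _ _ _ _ n m (x i) z1 z2 z3 z4 uniq8 no3AP8).
exact: perm_trans A_perm (perm_trans AB B_perm).
Qed.
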